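(* Let $p$ be a prime and $a_p(n)=\big[\frac{n}{p-1}\big]+v_p\big(\big[\frac{n}{p-1}\big]!\big)$ for integers $n\ge0$. Then $a_p(n)\geq a_p(k)+a_p(l)$ whenever $n\geq k+l$ (with $k,l\ge0$), and $a_p(m+n)\geq a_p(m+1)+v_p(n!)$ for all integers $m\ge 0$, $n\ge1$.
   Context: $[\alpha]$ denotes the integer part of $\alpha$ and $v_p$ the $p$-adic valuation. *)

From mathcomp Require Import all_boot.
Set Implicit Arguments. Unset Strict Implicit. Unset Printing Implicit Defensive.

Definition a_p (p n : nat) : nat := n %/ (p.-1) + logn p ((n %/ p.-1)`!).

From mathcomp Require Import all_boot.
From mathcomp Require Import zify.

(* Write q = p - 1.  The floor [n/q] is superadditive and [v_p(N!)] is
   superadditive and monotone in N (binomial coefficients are integers), which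
   gives the first inequality.  For the second, Legendre's formula
   [v_p(n!) = [n/p] + v_p([n/p]!)] yields [q * v_p(n!) < n], i.e.
   [v_p(n!) <= [(n-1)/q]], and superadditivity of the floor absorbs this term:
   [[(m+1)/q] + [(n-1)/q] <= [(m+n)/q]]. *)

Lemma leq_divD d m n : m %/ d + n %/ d <= (m + n) %/ d.
Proof.
case: d => [|d]; first by rewrite !divn0.
by rewrite (divnD _ _ (ltn0Sn d)) leq_addr.
Qed.

Lemma leq_logn_factD p m n : logn p m`! + logn p n`! <= logn p (m + n)`!.
Proof.
rewrite -(bin_fact (leq_addr n m)) addKn.
by rewrite lognM ?bin_gt0 ?leq_addr ?muln_gt0 ?fact_gt0 // lognM ?fact_gt0 ?leq_addl.
Qed.

Lemma leq_logn_fact p m n : m <= n -> logn p m`! <= logn p n`!.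
Proof.
move=> le_mn; rewrite -(subnKC le_mn).
by apply: leq_trans (leq_logn_factD _ _ _); rewrite leq_addr.
Qed.

Lemma a_p_superadditive p n k l : k + l <= n -> a_p p k + a_p p l <= a_p p n.
Proof.
move=> le_kl_n; rewrite /a_p.
have le_floor : k %/ p.-1 + l %/ p.-1 <= n %/ p.-1.
  exact: leq_trans (leq_divD _ _ _) (leq_div2r _ le_kl_n).
have := leq_logn_factD p (k %/ p.-1) (l %/ p.-1).
have := leq_logn_fact p _ _ le_floor.
lia.
Qed.

Section Legendre.

Variable p : nat.
Hypothesis p_pr : prime p.

Lemma logn_factS n : logn p n.+1`! = logn p n`! + logn p n.+1.
Proof. by rewrite factS lognM ?fact_gt0 // addnC. Qed.

Lemma logn_fact_divn n : logn p n`! = n %/ p + logn p (n %/ p)`!.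
Proof.
have p_gt0 := prime_gt0 p_pr.
elim: n => [|n IHn]; first by rewrite div0n.
rewrite logn_factS IHn divnS // (lognE p n.+1) p_pr /=.
case: (boolP (p %| n.+1)) => [dvd_p | ndvd_p] /=; last by rewrite add0n addn0.
have -> : n.+1 %/ p = (n %/ p).+1 by rewrite divnS // dvd_p.
rewrite logn_factS; lia.
Qed.

Lemma logn_fact_lt n : 0 < n -> p.-1 * logn p n`! < n.
Proof.
have p_gt1 := prime_gt1 p_pr.
elim/ltn_ind: n => n IHn n_gt0; rewrite logn_fact_divn.
case def_c: (n %/ p) => [|c].
  by rewrite logn_fact //= big_geq // muln0.
have lt_cn : c.+1 < n by rewrite -def_c ltn_Pdiv.
have := IHn _ lt_cn (ltn0Sn c).
have := leq_divM n p; rewrite def_c.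
have : p.-1 * c.+1 + c.+1 = c.+1 * p by case: p p_gt1 => // q _; lia.
lia.
Qed.

Lemma logn_fact_le_divn n : 0 < n -> logn p n`! <= n.-1 %/ p.-1.
Proof.
move=> n_gt0; have := logn_fact_lt _ n_gt0.
by rewrite leq_divRL -?subn1 ?subn_gt0 ?prime_gt1 // mulnC => ?; lia.
Qed.

Lemma a_p_shift m n : 0 < n -> a_p p (m + 1) + logn p n`! <= a_p p (m + n).
Proof.
move=> n_gt0; rewrite /a_p.
have le_floor : (m + 1) %/ p.-1 + n.-1 %/ p.-1 <= (m + n) %/ p.-1.
  apply: leq_trans (leq_divD _ _ _) (leq_div2r _ _); lia.
have := logn_fact_le_divn _ n_gt0.
have := leq_logn_fact p _ _ (leq_div2r p.-1 (_ : m + 1 <= m + n)).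
by rewrite leq_add2l; lia.
Qed.

End Legendre.

Theorem mainTheorem5 (p : nat) (hp : prime p) :
  (forall n k l : nat, k + l <= n -> a_p p k + a_p p l <= a_p p n) /\
  (forall m n : nat, 1 <= n -> a_p p (m + 1) + logn p (n`!) <= a_p p (m + n)).
Proof.
split; [exact: a_p_superadditive | exact: a_p_shift].
Qed.
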